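(* Let $\{a_n,n\ge1\}$ be a sequence of positive real numbers such that $a_n\to\infty$ and $a_n/a_{n-1}\to1$ as $n\to\infty$. Let $S_n=\sum_{i=1}^na_i$ and $S_{2,n}=\sum_{i=1}^na_i^2$. Then $a_n/S_n\to0$ and $S_{2,n}/S_n^2\to0$ as $n\to\infty$. *)

From Stdlib Require Import Reals.
From Coquelicot Require Import Coquelicot.
Open Scope R_scope.

(* S_n = sum_{i=1}^n a_i  (a is indexed from 1; a 0 is irrelevant) *)
Definition Ssum (a : nat -> R) (n : nat) : R :=
  sum_n_m a 1 n.

Definition S2sum (a : nat -> R) (n : nat) : R :=
  sum_n_m (fun i => (a i) ^ 2) 1 n.

(** If [a (n+1) / a n -> 1], then [c n = S_n / a n] satisfies
    [c (n+1) = (a n / a (n+1)) c n + 1], an affine recurrence whose multiplier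
    tends to 1; such a recurrence gains at least [1/2] per step until it exceeds
    any prescribed bound, so [S_n / a n -> +oo].  For the second limit, once
    [a i <= eps S_i] we have [a i^2 <= eps a i S_n] for [i <= n], so the tail of
    [S_{2,n}] is at most [eps S_n^2], while the head is a constant that is
    negligible against [S_n^2 -> +oo]. *)

From Stdlib Require Import Reals Lra Lia.
From Coquelicot Require Import Coquelicot.
Open Scope R_scope.

Lemma Ssum_0 (a : nat -> R) : Ssum a 0 = 0.
Proof. unfold Ssum. rewrite sum_n_m_zero; [reflexivity | lia]. Qed.

Lemma Ssum_S (a : nat -> R) (n : nat) : Ssum a (S n) = Ssum a n + a (S n).
Proof. unfold Ssum. rewrite sum_n_Sm; [reflexivity | lia]. Qed.

Lemma S2sum_S (a : nat -> R) (n : nat) : S2sum a (S n) = S2sum a n + a (S n) ^ 2.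
Proof. unfold S2sum. rewrite sum_n_Sm; [reflexivity | lia]. Qed.

Lemma S2sum_ge0 (a : nat -> R) (n : nat) : 0 <= S2sum a n.
Proof.
  induction n as [|n IH].
  - unfold S2sum. rewrite sum_n_m_zero; [apply Rle_refl | lia].
  - rewrite S2sum_S. pose proof (pow2_ge_0 (a (S n))). lra.
Qed.

Lemma Rmin_affine_step (K r x y : R) :
  1 <= K -> 1 - / (2 * K) <= r -> 0 <= x -> Rmin K y <= x ->
  Rmin K (y + / 2) <= r * x + 1.
Proof.
  intros K_ge1 r_ge x_ge0 below.
  assert (delta_pos : 0 < / (2 * K)) by (apply Rinv_0_lt_compat; lra).
  assert (delta_K : / (2 * K) * K = / 2) by (field; lra).
  assert (rx_ge : (1 - / (2 * K)) * x <= r * x) by (apply Rmult_le_compat_r; lra).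
  destruct (Rle_dec K x) as [K_le_x | x_lt_K].
  - (* beyond the threshold the iterate stays above [K] *)
    apply Rle_trans with K; [apply Rmin_l |].
    assert (delta_le : / (2 * K) <= / 2) by
      (apply Rinv_le_contravar; lra).
    assert ((1 - / (2 * K)) * K <= (1 - / (2 * K)) * x)
      by (apply Rmult_le_compat_l; lra).
    lra.
  - (* below the threshold the iterate gains at least [1/2] *)
    assert (/ (2 * K) * x <= / 2) by
      (rewrite <- delta_K; apply Rmult_le_compat_l; lra).
    unfold Rmin in *. destruct (Rle_dec K y), (Rle_dec K (y + / 2)); lra.
Qed.

Lemma is_lim_seq_affine_rec_p_infty (c r : nat -> R) :
  (forall n : nat, 0 <= c n) -> is_lim_seq r 1 ->
  (forall n : nat, r n * c n + 1 <= c (S n)) -> is_lim_seq c p_infty.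
Proof.
  intros c_ge0 r_lim rec. apply is_lim_seq_spec. intro M.
  set (K := Rmax M 1 + 1).
  assert (K_ge1 : 1 <= K) by (unfold K; pose proof (Rmax_r M 1); lra).
  assert (M_lt_K : M < K) by (unfold K; pose proof (Rmax_l M 1); lra).
  assert (delta_pos : 0 < / (2 * K)) by (apply Rinv_0_lt_compat; lra).
  apply is_lim_seq_spec in r_lim.
  destruct (r_lim (mkposreal _ delta_pos)) as [N HN].
  assert (growth : forall k, Rmin K (c N + INR k / 2) <= c (N + k)%nat).
  { induction k as [|k IH].
    - rewrite Nat.add_0_r. simpl. unfold Rdiv. rewrite Rmult_0_l, Rplus_0_r.
      apply Rmin_r.
    - rewrite Nat.add_succ_r, <- rec.
      replace (c N + INR (S k) / 2) with (c N + INR k / 2 + / 2)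
        by (rewrite S_INR; field).
      apply Rmin_affine_step; [exact K_ge1 | | apply c_ge0 | exact IH].
      specialize (HN (N + k)%nat ltac:(lia)). simpl in HN.
      apply Rabs_lt_between in HN. lra. }
  destruct (INR_unbounded (2 * K)) as [k0 Hk0].
  exists (N + k0)%nat. intros n Hn.
  replace n with (N + (n - N))%nat by lia.
  eapply Rlt_le_trans; [| apply growth].
  apply Rmin_glb_lt; [exact M_lt_K |].
  pose proof (le_INR _ _ (ltac:(lia) : (k0 <= n - N)%nat)). pose proof (c_ge0 N).
  lra.
Qed.

Section NonnegativeTerms.

Variable a : nat -> R.
Hypothesis a_ge0 : forall n : nat, (1 <= n)%nat -> 0 <= a n.

Lemma Ssum_ge0 (n : nat) : 0 <= Ssum a n.
Proof.
  induction n as [|n IH]; [rewrite Ssum_0; lra |].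
  rewrite Ssum_S. pose proof (a_ge0 (S n) ltac:(lia)). lra.
Qed.

Lemma term_le_Ssum (n : nat) : (1 <= n)%nat -> a n <= Ssum a n.
Proof.
  destruct n as [|n]; [lia |]. intros _.
  rewrite Ssum_S. pose proof (Ssum_ge0 n). lra.
Qed.

Lemma S2sum_le_shift (eps : R) (N : nat) :
  0 <= eps -> (forall n : nat, (N < n)%nat -> a n <= eps * Ssum a n) ->
  forall k : nat, S2sum a (N + k) <= S2sum a N + eps * Ssum a (N + k) ^ 2.
Proof.
  intros eps_ge0 small k. induction k as [|k IH].
  - rewrite Nat.add_0_r. pose proof (pow2_ge_0 (Ssum a N)).
    pose proof (Rmult_le_pos _ _ eps_ge0 (pow2_ge_0 (Ssum a N))). lra.
  - rewrite Nat.add_succ_r, S2sum_S, Ssum_S.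
    pose proof (small (S (N + k)) ltac:(lia)) as Hx. rewrite Ssum_S in Hx.
    pose proof (a_ge0 (S (N + k)) ltac:(lia)). pose proof (Ssum_ge0 (N + k)).
    set (x := a (S (N + k))) in *. set (s := Ssum a (N + k)) in *.
    assert (x * x <= x * (eps * (s + x))) by (apply Rmult_le_compat_l; lra).
    assert (0 <= eps * x * s) by (apply Rmult_le_pos; [apply Rmult_le_pos |]; lra).
    nra.
Qed.

Lemma S2sum_div_Ssum_sqr_lim :
  is_lim_seq (Ssum a) p_infty ->
  is_lim_seq (fun n : nat => a n / Ssum a n) 0 ->
  is_lim_seq (fun n : nat => S2sum a n / Ssum a n ^ 2) 0.
Proof.
  intros S_lim ratio_lim. apply is_lim_seq_spec. intro eps.
  assert (eps2_pos : 0 < eps / 2) by (pose proof (cond_pos eps); lra).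
  assert (S_pos : eventually (fun n => 0 < Ssum a n)).
  { apply is_lim_seq_spec in S_lim. destruct (S_lim 0) as [N2 HN2]. now exists N2. }
  destruct S_pos as [N2 HN2].
  apply is_lim_seq_spec in ratio_lim.
  destruct (ratio_lim (mkposreal _ eps2_pos)) as [N0 HN0].
  set (N := Nat.max N0 N2).
  assert (tail_small : forall n, (N < n)%nat -> a n <= eps / 2 * Ssum a n).
  { intros n Hn. specialize (HN0 n ltac:(lia)). specialize (HN2 n ltac:(lia)).
    simpl in HN0. rewrite Rminus_0_r, Rabs_pos_eq in HN0
      by (apply Rdiv_le_0_compat; [apply a_ge0; lia | exact HN2]).
    apply (Rlt_div_l _ _ _ HN2) in HN0. lra. }
  assert (head_lim : is_lim_seq (fun n : nat => S2sum a N / Ssum a n ^ 2) 0).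
  { replace (Finite 0) with (Rbar_mult (S2sum a N) (Rbar_inv p_infty))
      by (simpl; f_equal; ring).
    apply (is_lim_seq_scal_l (fun n => / Ssum a n ^ 2)), is_lim_seq_inv; [| discriminate].
    apply (is_lim_seq_ext (fun n => Ssum a n * Ssum a n)); [intro n; ring |].
    apply (is_lim_seq_mult _ _ p_infty p_infty); [exact S_lim | exact S_lim | reflexivity]. }
  apply is_lim_seq_spec in head_lim.
  destruct (head_lim (mkposreal _ eps2_pos)) as [N1 HN1].
  exists (Nat.max N N1). intros n Hn.
  pose proof (S2sum_le_shift (eps / 2) N ltac:(lra) tail_small (n - N)) as bound.
  replace (N + (n - N))%nat with n in bound by lia.
  specialize (HN1 n ltac:(lia)). specialize (HN2 n ltac:(lia)). simpl in HN1.
  assert (sq_pos : 0 < Ssum a n ^ 2) by (apply pow_lt; exact HN2).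
  rewrite Rminus_0_r in HN1 |- *.
  rewrite Rabs_pos_eq in HN1 by (apply Rdiv_le_0_compat; [apply S2sum_ge0 | lra]).
  rewrite Rabs_pos_eq by (apply Rdiv_le_0_compat; [apply S2sum_ge0 | lra]).
  apply (Rlt_div_l _ _ _ sq_pos) in HN1. apply (Rlt_div_l _ _ _ sq_pos).
  lra.
Qed.

End NonnegativeTerms.

Section PositiveTerms.

Variable a : nat -> R.
Hypothesis a_pos : forall n : nat, (1 <= n)%nat -> 0 < a n.

Let a_ge0 (n : nat) (n_ge1 : (1 <= n)%nat) : 0 <= a n := Rlt_le _ _ (a_pos n n_ge1).

Lemma Ssum_div_term_lim :
  is_lim_seq (fun n : nat => a (S n) / a n) 1 ->
  is_lim_seq (fun n : nat => Ssum a n / a n) p_infty.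
Proof.
  intros ratio_lim.
  apply (is_lim_seq_affine_rec_p_infty _ (fun n => a n / a (S n))).
  - intros [|n].
    + rewrite Ssum_0. unfold Rdiv. rewrite Rmult_0_l. apply Rle_refl.
    + apply Rdiv_le_0_compat; [apply Ssum_ge0, a_ge0 | apply a_pos]; lia.
  - apply is_lim_seq_ext_loc with (u := fun n => / (a (S n) / a n)).
    + exists 1%nat. intros n Hn.
      pose proof (a_pos n Hn). pose proof (a_pos (S n) ltac:(lia)).
      field. lra.
    + replace (Finite 1) with (Rbar_inv 1) by (simpl; rewrite Rinv_1; reflexivity).
      apply is_lim_seq_inv; [exact ratio_lim | intro E; injection E; lra].
  - (* the recursion also holds at [n = 0], since [Ssum a 0 / a 0 = 0] *)
    intro n. rewrite Ssum_S. pose proof (a_pos (S n) ltac:(lia)).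
    destruct n as [|n].
    + rewrite Ssum_0, Rplus_0_l. unfold Rdiv.
      rewrite Rmult_0_l, Rmult_0_r, Rinv_r by lra. lra.
    + pose proof (a_pos (S n) ltac:(lia)). right. field. lra.
Qed.

Lemma term_div_Ssum_lim :
  is_lim_seq (fun n : nat => a (S n) / a n) 1 ->
  is_lim_seq (fun n : nat => a n / Ssum a n) 0.
Proof.
  intros ratio_lim.
  apply is_lim_seq_ext_loc with (u := fun n => / (Ssum a n / a n)).
  - exists 1%nat. intros n Hn.
    pose proof (a_pos n Hn). pose proof (term_le_Ssum a a_ge0 n Hn).
    field. lra.
  - replace (Finite 0) with (Rbar_inv p_infty) by reflexivity.
    apply is_lim_seq_inv; [exact (Ssum_div_term_lim ratio_lim) | discriminate].
Qed.

End PositiveTerms.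

Theorem lemmaA1 (a : nat -> R)
  (hpos : forall n : nat, (1 <= n)%nat -> 0 < a n)
  (hinf : is_lim_seq a p_infty)
  (hratio : is_lim_seq (fun n : nat => a (S n) / a n) 1) :
  is_lim_seq (fun n : nat => a n / Ssum a n) 0 /\
  is_lim_seq (fun n : nat => S2sum a n / (Ssum a n) ^ 2) 0.
Proof.
  assert (a_ge0 : forall n : nat, (1 <= n)%nat -> 0 <= a n)
    by (intros n n_ge1; exact (Rlt_le _ _ (hpos n n_ge1))).
  pose proof (term_div_Ssum_lim a hpos hratio) as ratio_lim.
  split; [exact ratio_lim |].
  apply (S2sum_div_Ssum_sqr_lim a a_ge0); [| exact ratio_lim].
  apply is_lim_seq_le_p_loc with (u := a); [| exact hinf].
  exists 1%nat. exact (term_le_Ssum a a_ge0).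
Qed.
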